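(* Let $\{(\mathcal{X}_i,\mathring{\mathcal{X}}_i,p_i)\}_{i\in\mathcal{I}}$ be $B$-$B$-bimodules with specified projections with reduced free product $(\mathcal{X},\mathring{\mathcal{X}},p)$, and set $\mathcal{A}=\mathcal{L}(\mathcal{X})$, $\mathbb{E}=\mathbb{E}_{\mathcal{L}(\mathcal{X})}$, $\mathcal{A}_{i,\mathcal{F}}=\lambda_i(\mathcal{L}(\mathcal{X}_i))$, $\mathcal{A}_{i,\mathcal{B}}=P_i\lambda_i(\mathcal{L}(\mathcal{X}_i))P_i$. Let $\omega:[n]\to\mathcal{I}$, $\chi:[n]\to\{\mathcal{F},\mathcal{B}\}$ and $a_k\in\mathcal{A}_{\omega(k),\chi(k)}$. If $\chi(1)=\mathcal{B}$, then there exists $T\in\mathcal{A}_{\omega(1),\mathcal{F}}$ such that $\mathbb{E}(a_1\cdots a_n)=\mathbb{E}(Ta_2\cdots a_n)$.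
   Context: $B$ is a unital complex algebra. A $B$-$B$-bimodule with specified projection is a triple $(\mathcal{X},\mathring{\mathcal{X}},p)$ with $\mathcal{X}=B\oplus\mathring{\mathcal{X}}$ a direct sum of $B$-$B$-bimodules and $p(b\oplus\eta)=b$; $\mathcal{L}(\mathcal{X})$ is the algebra of linear operators on $\mathcal{X}$ respecting the bimodule structure and $\mathbb{E}_{\mathcal{L}(\mathcal{X})}(T)=p(T(1_B\oplus0))$. The reduced free product of $\{(\mathcal{X}_i,\mathring{\mathcal{X}}_i,p_i)\}$ is $\mathcal{X}=B\oplus\mathring{\mathcal{X}}$ with $\mathring{\mathcal{X}}=\bigoplus_{n\ge1}\bigoplus_{i_1\ne\cdots\ne i_n}\mathring{\mathcal{X}}_{i_1}\otimes_B\cdots\otimes_B\mathring{\mathcal{X}}_{i_n}$ (consecutive indices distinct) and $p$ the projection onto $B$. For $i\in\mathcal{I}$, $\mathcal{X}(i)=B\oplus\bigoplus_{n\ge1}\bigoplus_{i_1\ne\cdots\ne i_n,\ i_1\ne i}\mathring{\mathcal{X}}_{i_1}\otimes_B\cdots\otimes_B\mathring{\mathcal{X}}_{i_n}$, $V_i:\mathcal{X}\to\mathcal{X}_i\otimes_B\mathcal{X}(i)$ is the natural isomorphism, $\lambda_i(T)=V_i^{-1}(T\otimes I)V_i$ for $T\in\mathcal{L}(\mathcal{X}_i)$, and $P_i$ is the projection of $\mathcal{X}$ onto the summand $B\oplus\mathring{\mathcal{X}}_i$ (zero on all other summands). *)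

From HB Require Import structures.
From mathcomp Require Import all_boot all_order all_algebra.
From mathcomp Require Import complex reals.
From Stdlib Require Import ClassicalEpsilon Relations.

Set Implicit Arguments.
Unset Strict Implicit.
Unset Printing Implicit Defensive.

Import GRing.Theory.
Local Open Scope ring_scope.

Section Bimod.
Variables (C : fieldType) (B : algType C).

Record bimod := Bimod {
  bm_carrier :> lmodType C;
  lact : B -> bm_carrier -> bm_carrier;
  ract : bm_carrier -> B -> bm_carrier;
  lactDl : forall b1 b2 x, lact (b1 + b2) x = lact b1 x + lact b2 x;
  lactDr : forall b x y, lact b (x + y) = lact b x + lact b y;
  lactZl : forall (c : C) b x, lact (c *: b) x = c *: lact b x;
  lactZr : forall (c : C) b x, lact b (c *: x) = c *: lact b x;
  lactM : forall b1 b2 x, lact (b1 * b2) x = lact b1 (lact b2 x);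
  lact1 : forall x, lact 1 x = x;
  ractDl : forall x y b, ract (x + y) b = ract x b + ract y b;
  ractDr : forall x b1 b2, ract x (b1 + b2) = ract x b1 + ract x b2;
  ractZl : forall (c : C) x b, ract (c *: x) b = c *: ract x b;
  ractZr : forall (c : C) x b, ract x (c *: b) = c *: ract x b;
  ractM : forall x b1 b2, ract x (b1 * b2) = ract (ract x b1) b2;
  ract1 : forall x, ract x 1 = x;
  lractA : forall b1 x b2, lact b1 (ract x b2) = ract (lact b1 x) b2
}.

End Bimod.

Section Xi.
Variables (C : fieldType) (B : algType C) (M : bimod B).

Definition Xsp := (B * M)%type.            (* b (+) xi ;  p_i = fst *)
Definition Xadd (x y : Xsp) : Xsp := (x.1 + y.1, x.2 + y.2).
Definition Xscale (c : C) (x : Xsp) : Xsp := (c *: x.1, c *: x.2).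
Definition Xlact (b : B) (x : Xsp) : Xsp := (b * x.1, lact b x.2).
Definition Xract (x : Xsp) (b : B) : Xsp := (x.1 * b, ract x.2 b).

Definition LXsp (T : Xsp -> Xsp) : Prop :=
  [/\ forall x y, T (Xadd x y) = Xadd (T x) (T y),
      forall c x, T (Xscale c x) = Xscale c (T x),
      forall b x, T (Xlact b x) = Xlact b (T x) &
      forall x b, T (Xract x b) = Xract (T x) b].

End Xi.

(* The reduced free product X = B (+) (+)_{i1<>...<>in} Xo_i1 (x)_B ... .   *)
(* Encoded as formal finite sums of generators modulo the relations         *)
(* defining direct sums and balanced tensor products over B.                *)
Section FreeProduct.
Variables (C : fieldType) (B : algType C) (I : Type) (Xo : I -> bimod B).

Definition letter := {i : I & (Xo i : Type)}.
Definition mkl (i : I) (u : Xo i) : letter := existT (fun k => (Xo k : Type)) i u.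

Fixpoint alt_from (i : I) (s : seq letter) : Prop :=
  match s with
  | [::] => True
  | x :: s' => tag x <> i /\ alt_from (tag x) s'
  end.

Definition alternating (s : seq letter) : Prop :=
  match s with
  | [::] => False
  | x :: s' => alt_from (tag x) s'
  end.

(* generator: an element of the summand B, or an elementary tensor
   xi_1 (x) ... (x) xi_n  (non-alternating sequences are junk, set to 0) *)
Definition gen := (B + seq letter)%type.
Definition Xrep := seq gen.

Inductive rel0 : Xrep -> Xrep -> Prop :=
  | rel_comm x y : rel0 (x ++ y) (y ++ x)
  | rel_Badd b1 b2 : rel0 [:: inl b1; inl b2] [:: inl (b1 + b2)]
  | rel_B0 : rel0 [:: inl 0] [::]
  | rel_add s1 s2 i (u v : Xo i) :
      rel0 [:: inr (s1 ++ mkl (u + v) :: s2)]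
           [:: inr (s1 ++ mkl u :: s2); inr (s1 ++ mkl v :: s2)]
  | rel_zero s1 s2 i :
      rel0 [:: inr (s1 ++ mkl (0 : Xo i) :: s2)] [::]
  | rel_bal s1 s2 i j (u : Xo i) (v : Xo j) (b : B) :
      rel0 [:: inr (s1 ++ mkl (ract u b) :: mkl v :: s2)]
           [:: inr (s1 ++ mkl u :: mkl (lact b v) :: s2)]
  | rel_junk s : ~ alternating s -> rel0 [:: inr s] [::].

Definition rel_step (x y : Xrep) : Prop :=
  exists a c x' y', [/\ rel0 x' y', x = a ++ x' ++ c & y = a ++ y' ++ c].

Definition Xeq : Xrep -> Xrep -> Prop := clos_refl_sym_trans Xrep rel_step.

Definition pX (x : Xrep) : B :=
  foldr (fun g acc => match g with inl b => b + acc | inr _ => acc end) 0 x.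

Definition lact_word (b : B) (s : seq letter) : seq letter :=
  match s with
  | [::] => [::]
  | x :: s' => mkl (lact b (tagged x)) :: s'
  end.

Definition decP (P : Prop) : {P} + {~ P} := excluded_middle_informative P.

Definition cast_letter (i : I) (x : letter) (e : tag x = i) : Xo i :=
  eq_rect (tag x) (fun k => (Xo k : Type)) (tagged x) i e.

(* lambda_i(T) = V_i^{-1} (T (x) I) V_i , on generators *)
Definition lam_gen (i : I) (T : Xsp (Xo i) -> Xsp (Xo i)) (g : gen) : Xrep :=
  match g with
  | inl b => let t := T (b, 0) in [:: inl t.1; inr [:: mkl t.2]]
  | inr s =>
    match decP (alternating s) with
    | right _ => [::]
    | left _ =>
      match s with
      | [::] => [::]
      | x :: s' =>
        match decP (tag x = i) with
        | left e =>
          let t := T (0, cast_letter e) in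
          (match s' with
           | [::] => [:: inl t.1]
           | _ :: _ => [:: inr (lact_word t.1 s')]
           end) ++ [:: inr (mkl t.2 :: s')]
        | right _ =>
          let t := T (1, 0) in
          [:: inr (lact_word t.1 s); inr (mkl t.2 :: s)]
        end
      end
    end
  end.

Definition lam (i : I) (T : Xsp (Xo i) -> Xsp (Xo i)) (x : Xrep) : Xrep :=
  flatten (map (lam_gen T) x).

Definition keepP (i : I) (g : gen) : bool :=
  match g with
  | inl _ => true
  | inr [:: x] => if decP (tag x = i) then true else false
  | inr _ => false
  end.

Definition Pproj (i : I) (x : Xrep) : Xrep := filter (keepP i) x.

(* algebras A_{i,F} and A_{i,B}  (elements of L(X) given by representatives,
   equal in L(X) when pointwise equal in X) *)
Inductive FB := Fkind | Bkind.

Definition Acal (i : I) (k : FB) (f : Xrep -> Xrep) : Prop :=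
  match k with
  | Fkind => exists T : Xsp (Xo i) -> Xsp (Xo i), LXsp T /\ forall x, Xeq (f x) (lam T x)
  | Bkind => exists T : Xsp (Xo i) -> Xsp (Xo i), LXsp T /\ forall x, Xeq (f x) (Pproj i (lam T (Pproj i x)))
  end.

Definition EE (f : Xrep -> Xrep) : B := pX (f [:: inl 1]).

End FreeProduct.

Definition prod_ops (T : Type) (fs : seq (T -> T)) : T -> T :=
  foldr (fun f g => f \o g) id fs.

(* Take T := lambda_i(T0) for the T0 with a_1 = P_i lambda_i(T0) P_i.  The
   projection p is unchanged by P_i, and lambda_i(T0) sends every summand of X
   other than B (+) Xo_i into the reduced part Xo, so the outer and the inner
   P_i are both invisible to p. *)
From Pilot Require Import Defs.
From HB Require Import structures.
From mathcomp Require Import all_boot all_order all_algebra.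
From mathcomp Require Import complex reals.
From Stdlib Require Import Relations.

Set Implicit Arguments.
Unset Strict Implicit.
Unset Printing Implicit Defensive.
Local Open Scope ring_scope.
Import GRing.Theory.

Section ProjectionOntoB.
Variables (C : fieldType) (B : algType C) (I : Type) (Xo : I -> bimod B).

Lemma pX_cat (x y : Xrep Xo) : pX (x ++ y) = pX x + pX y.
Proof.
elim: x => [|[b|s] x IH] /=; first by rewrite add0r.
  by rewrite IH addrA.
exact: IH.
Qed.

Lemma pX_rel0 (x y : Xrep Xo) : rel0 x y -> pX x = pX y.
Proof.
case=> //= [u v|b1 b2|]; last by rewrite addr0.
  by rewrite !pX_cat addrC.
by rewrite !addr0.
Qed.

Lemma pX_Xeq (x y : Xrep Xo) : Xeq x y -> pX x = pX y.
Proof.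
elim=> [u v [a [c [x' [y' [rel_xy -> ->]]]]]| | u v _ -> | u v w _ -> _ ->] //.
by rewrite !pX_cat (pX_rel0 rel_xy).
Qed.

Lemma pX_Pproj i (x : Xrep Xo) : pX (Pproj i x) = pX x.
Proof.
elim: x => [|[b|s] x IH] //=; first by rewrite IH.
by case: ifP => _ /=.
Qed.

Lemma pX_lam_gen_eq0 i (T : Xsp (Xo i) -> Xsp (Xo i)) (g : gen Xo) :
  ~~ keepP i g -> pX (lam_gen T g) = 0.
Proof.
case: g => [//|s] /= not_kept.
case: (Defs.decP (alternating s)) => // _.
case: s not_kept => [//|x s] /=.
case: (Defs.decP (tag x = i)) => [xi|//] /= not_kept.
by case: s not_kept.
Qed.

Lemma pX_lam_Pproj i (T : Xsp (Xo i) -> Xsp (Xo i)) (x : Xrep Xo) :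
  pX (lam T (Pproj i x)) = pX (lam T x).
Proof.
rewrite /lam /Pproj; elim: x => [|g x IH] //=.
case: ifP => kept /=; rewrite !pX_cat IH //.
by rewrite pX_lam_gen_eq0 ?kept // add0r.
Qed.

Lemma lam_Acal_F i (T : Xsp (Xo i) -> Xsp (Xo i)) :
  LXsp T -> Acal i Fkind (lam T).
Proof. by move=> LT; exists T; split=> // x; apply: rst_refl. Qed.

End ProjectionOntoB.

Lemma prod_ops_ord_recl (T : Type) n (a : 'I_n.+1 -> T -> T) :
  prod_ops [seq a k | k <- enum 'I_n.+1] =
  a ord0 \o prod_ops [seq a (lift ord0 k) | k <- enum 'I_n].
Proof. by rewrite enum_ordSl map_cons -map_comp. Qed.

Theorem lemma4p9 (R : realType) (B : algType (complex R)) (I : Type)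
    (Xo : I -> bimod B) (n : nat)
    (omega : 'I_n.+1 -> I) (chi : 'I_n.+1 -> FB)
    (a : 'I_n.+1 -> Xrep Xo -> Xrep Xo) :
  (forall k, Acal (omega k) (chi k) (a k)) ->
  chi ord0 = Bkind ->
  exists T : Xrep Xo -> Xrep Xo,
    Acal (omega ord0) Fkind T /\
    EE (prod_ops [seq a k | k <- enum 'I_n.+1]) =
    EE (T \o prod_ops [seq a (lift ord0 k) | k <- enum 'I_n]).
Proof.
move=> a_in chi0; move: (a_in ord0); rewrite chi0 => -[T0 [LT0 a0E]].
exists (lam T0); split; first exact: lam_Acal_F.
rewrite prod_ops_ord_recl /EE /=.
by rewrite (pX_Xeq (a0E _)) pX_Pproj pX_lam_Pproj.
Qed.
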